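(* Let $\Sigma=\{a,b\}$ and let $A,B,C$ be positive integers. For $w\in\mathbb{P}^\Sigma$ and $M\in[0..B]^\Sigma_\Sigma$ let $\mathrm{angle}(w,M)=w+M\mathbb{P}^\Sigma$. For $v\in\mathbb{P}^\Sigma$ let $$\mathrm{reg}(v)=\{u\in\mathbb{P}^\Sigma:\ \forall w\in[0;A]^\Sigma\ \forall M\in[0..B]^\Sigma_\Sigma\ \ (v\in\mathrm{angle}(w,M)\iff u\in\mathrm{angle}(w,M))\}.$$ Then for each $v\in\mathbb{N}^\Sigma$ there exists $v'\in\mathbb{N}^\Sigma$ such that $\|v'\|=O(AB^2+BC)$, $v'\in\mathrm{reg}(v)$, and $v-v'\in C\mathbb{Z}^\Sigma$; the implicit constant is absolute (independent of $A,B,C,v$).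
   Context: $\mathbb{P}$ denotes the set of non-negative rationals, $[0..B]=\{0,1,\ldots,B\}$, $[0;A]$ the set of rationals in the interval from $0$ to $A$. $[0..B]^\Sigma_\Sigma$ is the set of $\Sigma\times\Sigma$ matrices with entries in $[0..B]$; for a matrix $M$ with columns $M^x$ and $\lambda\in\mathbb{P}^\Sigma$, $M\lambda=\sum_x\lambda_xM^x$, and $M\mathbb{P}^\Sigma=\{M\lambda:\lambda\in\mathbb{P}^\Sigma\}$; $w+X=\{w+x:x\in X\}$. For $v\in\mathbb{Q}^\Sigma$, $\|v\|=\max_x|v(x)|$; $C\mathbb{Z}^\Sigma=\{Cz:z\in\mathbb{Z}^\Sigma\}$. *)

(* Sigma = {a,b} is modelled by the index type 'I_2;
   vectors in Q^Sigma are column vectors 'cV[rat]_2, matrices in Q^Sigma_Sigma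
   are 'M[rat]_2 (column x of M is M^x), and M lambda = M *m lambda. *)
From HB Require Import structures.
From mathcomp Require Import all_boot all_order all_algebra.
Set Implicit Arguments. Unset Strict Implicit. Unset Printing Implicit Defensive.
Import Order.TTheory GRing.Theory Num.Theory.
Local Open Scope ring_scope.

Definition vec := 'cV[rat]_2.

Definition nonneg (v : vec) : Prop := forall i : 'I_2, 0 <= v i 0.

Definition natvec (v : vec) : Prop := forall i : 'I_2, exists n : nat, v i 0 = n%:R.

Definition ratbox (A : nat) (w : vec) : Prop :=
  forall i : 'I_2, 0 <= w i 0 /\ w i 0 <= A%:R.

Definition intmat (B : nat) (M : 'M[rat]_2) : Prop :=
  forall i j : 'I_2, exists k : nat, (k <= B)%N /\ M i j = k%:R.

Definition in_angle (w : vec) (M : 'M[rat]_2) (u : vec) : Prop :=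
  exists lam : vec, nonneg lam /\ u = w + M *m lam.

Definition in_reg (A B : nat) (v u : vec) : Prop :=
  nonneg u /\
  forall (w : vec) (M : 'M[rat]_2), ratbox A w -> intmat B M ->
    (in_angle w M v <-> in_angle w M u).

Definition vnorm (v : vec) : rat := \big[Num.max/0]_(i < 2) `|v i 0|.

Definition in_CZ (C : nat) (v : vec) : Prop :=
  forall i : 'I_2, exists z : int, v i 0 = C%:R * z%:~R.

(* Whether u lies in the angle w + M P^2 only depends on the signs of the
   determinants det(M^j, u - w), and det(m, w) lies in [-A B, A B] for
   m in [0..B]^2 and w in [0;A]^2.  It therefore suffices to find v' = v mod C
   such that, for every direction m in [0..B]^2, det(m, v') either equals
   det(m, v) or lies beyond A B on the same side as det(m, v), and such that
   v' = v unless both lie outside [0, A]^2.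
   If v is within A B of the line spanned by some direction d, slide v back
   along that line by a multiple of C d: every other determinant keeps its sign
   and stays beyond A B.  Otherwise v lies strictly inside the sector between
   two directions d1, d2 that are adjacent in slope order; writing
   D v = P d1 + Q d2 with D = det(d1, d2), reduce P and Q modulo C D while
   keeping them above D A B. *)

From HB Require Import structures.
From mathcomp Require Import all_boot all_order all_algebra.
From mathcomp Require Import zify ring lra.
From Stdlib Require Import Classical.
Import Order.TTheory GRing.Theory Num.Theory.
Local Open Scope ring_scope.

Definition det2 {R : comPzRingType} (a b x y : R) : R := a * y - b * x.

Definition eq_beyond {R : numDomainType} (c a a' : R) : Prop :=
  a = a' \/ (c < a /\ c < a') \/ (a < - c /\ a' < - c).

Definition off_box {R : numDomainType} (A x y : R) : Prop := A < x \/ A < y.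

Definition dir_box (B a b : int) : bool := (0 <= a <= B) && (0 <= b <= B).

Section EqBeyond.
Context {R : realDomainType}.

Lemma eq_beyond_sym {c a a' : R} : eq_beyond c a a' -> eq_beyond c a' a.
Proof. by case=> [->|[[]|[]]]; [left|right; left|right; right]. Qed.

Lemma eq_beyond_oppr {c a a' : R} : eq_beyond c a a' -> eq_beyond c (- a) (- a').
Proof. by case=> [->|[[h h']|[h h']]]; [left|right; right|right; left]; lra. Qed.

Lemma sgr_sub_eq_beyond {c a a' b : R} :
  eq_beyond c a a' -> `|b| <= c -> Num.sg (a - b) = Num.sg (a' - b).
Proof.
rewrite ler_norml => + /andP[hb hb'].
case=> [->//|[[h h']|[h h']]].
  by rewrite !gtr0_sg // subr_gt0; lra.
by rewrite !ltr0_sg // subr_lt0; lra.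
Qed.

End EqBeyond.

Lemma eq_beyond_intr (R : realDomainType) {c a a' : int} :
  eq_beyond c a a' -> eq_beyond (c%:~R : R) a%:~R a'%:~R.
Proof.
case=> [->|[[h h']|[h h']]]; [by left|right; left|right; right];
  by rewrite -?rmorphN !ltr_int.
Qed.

Section Cone.
Context {R : realFieldType}.

Lemma mulr_ge0_sgr_eq (a a' d : R) :
  Num.sg a = Num.sg a' -> 0 <= a * d -> 0 <= a' * d.
Proof. by move=> e; rewrite -sgr_ge0 sgrM e -sgrM sgr_ge0. Qed.

Lemma det2_eq0_ray {p0 p1 z0 z1 : R} :
  0 <= p0 -> 0 <= p1 -> 0 < p0 + p1 -> det2 p0 p1 z0 z1 = 0 ->
  0 < z0 \/ 0 < z1 -> exists2 s, 0 <= s & z0 = s * p0 /\ z1 = s * p1.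
Proof.
rewrite /det2 => p0_ge0 p1_ge0 p_gt0 /eqP; rewrite subr_eq0 => /eqP e z_pos.
have [p0_gt0|p0_le0] := ltrP 0 p0.
  have z0_ge0 : 0 <= z0.
    rewrite leNgt; apply/negP => z0_lt0; case: z_pos => [|z1_gt0]; first lra.
    have : p1 * z0 <= 0 by rewrite mulr_ge0_le0 // ltW.
    by rewrite -e pmulr_rle0 // leNgt z1_gt0.
  exists (z0 / p0); first exact: divr_ge0.
  split; apply: (mulfI (lt0r_neq0 p0_gt0)); rewrite ?e; field; exact: lt0r_neq0.
have p0_eq0 : p0 = 0 by lra.
have p1_gt0 : 0 < p1 by lra.
have z0_eq0 : z0 = 0.
  by apply: (mulfI (lt0r_neq0 p1_gt0)); rewrite -e p0_eq0 !mul0r mulr0.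
exists (z1 / p1); first by apply: divr_ge0; [case: z_pos; lra|exact: ltW].
by rewrite z0_eq0 p0_eq0 mulr0; split=> //; rewrite divfK ?gt_eqF.
Qed.

Lemma cone2_of_sgr_det {p0 p1 q0 q1 l0 l1 z0 z1 z0' z1' : R} :
  0 <= p0 -> 0 <= p1 -> 0 <= q0 -> 0 <= q1 -> 0 <= l0 -> 0 <= l1 ->
  z0 = p0 * l0 + q0 * l1 -> z1 = p1 * l0 + q1 * l1 ->
  Num.sg (det2 p0 p1 z0 z1) = Num.sg (det2 p0 p1 z0' z1') ->
  Num.sg (det2 q0 q1 z0 z1) = Num.sg (det2 q0 q1 z0' z1') ->
  0 < z0 \/ 0 < z1 -> 0 < z0' \/ 0 < z1' ->
  exists l0' l1',
    [/\ 0 <= l0', 0 <= l1', z0' = p0 * l0' + q0 * l1' & z1' = p1 * l0' + q1 * l1'].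
Proof.
move=> p0_ge0 p1_ge0 q0_ge0 q1_ge0 l0_ge0 l1_ge0 e0 e1 sg_p sg_q z_pos z'_pos.
set D := det2 p0 p1 q0 q1.
have det_p : det2 p0 p1 z0 z1 = D * l1 by rewrite e0 e1 /D /det2; ring.
have det_q : det2 q0 q1 z0 z1 = - (D * l0) by rewrite e0 e1 /D /det2; ring.
have [D_eq0|D_neq0] := eqVneq D 0; last first.
  exists (det2 q0 q1 z0' z1' * - D^-1), (det2 p0 p1 z0' z1' * D^-1); split.
  - apply: mulr_ge0_sgr_eq sg_q _.
    by rewrite det_q mulrNN mulrAC divff // mul1r.
  - apply: mulr_ge0_sgr_eq sg_p _.
    by rewrite det_p mulrAC divff // mul1r.
  - by rewrite /D /det2 in D_neq0 *; field.
  - by rewrite /D /det2 in D_neq0 *; field.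
have det_p' : det2 p0 p1 z0' z1' = 0.
  by apply/eqP; rewrite -sgr_eq0 -sg_p det_p D_eq0 mul0r sgr0.
have det_q' : det2 q0 q1 z0' z1' = 0.
  by apply/eqP; rewrite -sgr_eq0 -sg_q det_q D_eq0 mul0r oppr0 sgr0.
have [p_gt0|p_le0] := ltrP 0 (p0 + p1).
  have [s s_ge0 [-> ->]] := det2_eq0_ray p0_ge0 p1_ge0 p_gt0 det_p' z'_pos.
  by exists s, 0; split; rewrite ?mulr0 ?addr0 // mulrC.
have q_gt0 : 0 < q0 + q1.
  rewrite ltNge; apply/negP => q_le0.
  have [p0_0 p1_0 q0_0 q1_0] : [/\ p0 = 0, p1 = 0, q0 = 0 & q1 = 0] by split; lra.
  by move: z_pos; rewrite e0 e1 p0_0 p1_0 q0_0 q1_0 !mul0r !addr0; lra.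
have [s s_ge0 [-> ->]] := det2_eq0_ray q0_ge0 q1_ge0 q_gt0 det_q' z'_pos.
by exists 0, s; split; rewrite ?mulr0 ?add0r // mulrC.
Qed.

End Cone.

Definition vec2 (a b : rat) : vec := \col_i (if i == 0 then a else b).

Lemma vec2_0 a b : vec2 a b 0 0 = a. Proof. by rewrite mxE. Qed.
Lemma vec2_1 a b : vec2 a b 1 0 = b. Proof. by rewrite mxE. Qed.
Definition vec2E := (vec2_0, vec2_1).

Lemma ord2P (i : 'I_2) : i = 0 \/ i = 1.
Proof. by case: i => [[|[|n]]] Hi; [left|right|by []]; apply: val_inj. Qed.

Lemma cV2P (T : Type) (u v : 'cV[T]_2) : u 0 0 = v 0 0 -> u 1 0 = v 1 0 -> u = v.
Proof. by move=> e0 e1; apply/matrixP => i j; rewrite [j]ord1; case: (ord2P i) => ->. Qed.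

Lemma mulmx_cV2E (R : pzRingType) (M : 'M[R]_2) (l : 'cV[R]_2) i :
  (M *m l) i 0 = M i 0 * l 0 0 + M i 1 * l 1 0.
Proof.
rewrite mxE !big_ord_recl big_ord0 addr0.
by have -> : lift ord0 ord0 = 1 :> 'I_2 by apply: val_inj.
Qed.

Lemma det2_box_le (R : realDomainType) (A B a b w0 w1 : R) :
  0 <= a <= B -> 0 <= b <= B -> 0 <= w0 <= A -> 0 <= w1 <= A ->
  `|det2 a b w0 w1| <= A * B.
Proof.
move=> /andP[a0 aB] /andP[b0 bB] /andP[w00 w0A] /andP[w10 w1A].
have h1 : a * w1 <= A * B by rewrite mulrC ler_pM.
have h2 : b * w0 <= A * B by rewrite mulrC ler_pM.
have h3 : 0 <= a * w1 by exact: mulr_ge0.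
have h4 : 0 <= b * w0 by exact: mulr_ge0.
rewrite ler_norml /det2; lra.
Qed.

Lemma in_angle_transfer (A B : nat) (u u' w : vec) (M : 'M[rat]_2) :
  ratbox A w -> intmat B M ->
  (forall a b : nat, (a <= B)%N -> (b <= B)%N ->
     eq_beyond (A%:R * B%:R)
       (det2 a%:R b%:R (u 0 0) (u 1 0)) (det2 a%:R b%:R (u' 0 0) (u' 1 0))) ->
  u = u' \/ off_box A%:R (u 0 0) (u 1 0) /\ off_box A%:R (u' 0 0) (u' 1 0) ->
  in_angle w M u -> in_angle w M u'.
Proof.
move=> w_box M_int equiv [->//|[off off']] [lam [lam_ge0 eu]].
have [w0_ge0 w0_le] := w_box 0; have [w1_ge0 w1_le] := w_box 1.
have M_ge0 i j : 0 <= M i j by have [k [_ ->]] := M_int i j; exact: ler0n.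
have sg_col (j : 'I_2) : Num.sg (det2 (M 0 j) (M 1 j) (u 0 0 - w 0 0) (u 1 0 - w 1 0)) =
    Num.sg (det2 (M 0 j) (M 1 j) (u' 0 0 - w 0 0) (u' 1 0 - w 1 0)).
  have [a [aB ->]] := M_int 0 j; have [b [bB ->]] := M_int 1 j.
  have shift z0 z1 : det2 a%:R b%:R (z0 - w 0 0) (z1 - w 1 0) =
      det2 a%:R b%:R z0 z1 - det2 a%:R b%:R (w 0 0) (w 1 0) :> rat.
    by rewrite /det2; ring.
  rewrite !shift; apply: sgr_sub_eq_beyond (equiv a b aB bB) _.
  by apply: det2_box_le; rewrite ?ler0n ?ler_nat ?w0_ge0 ?w1_ge0.
have off_pos z0 z1 : off_box A%:R z0 z1 -> 0 < z0 - w 0 0 \/ 0 < z1 - w 1 0.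
  by case=> h; [left|right]; lra.
have ez i : u i 0 - w i 0 = M i 0 * lam 0 0 + M i 1 * lam 1 0.
  by rewrite eu mxE mulmx_cV2E; ring.
have [l0 [l1 [l0_ge0 l1_ge0 e0 e1]]] :=
  cone2_of_sgr_det (M_ge0 0 0) (M_ge0 1 0) (M_ge0 0 1) (M_ge0 1 1)
    (lam_ge0 0) (lam_ge0 1) (ez 0) (ez 1)
    (sg_col 0) (sg_col 1) (off_pos _ _ off) (off_pos _ _ off').
exists (vec2 l0 l1); split; first by move=> i; case: (ord2P i) => ->; rewrite vec2E.
apply: cV2P; rewrite mxE mulmx_cV2E !vec2E; [rewrite -e0|rewrite -e1]; ring.
Qed.

Definition det_equiv (A B x y x' y' : int) : Prop :=
  forall a b : int, dir_box B a b ->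
    eq_beyond (A * B) (det2 a b x y) (det2 a b x' y').

Definition reduct_bound (A B C : int) : int := 3 * (A * B ^+ 2 + B * C).

(* [(x', y')] is an admissible [v'] for [v = (x, y)], read over the integers. *)
Definition reduct (A B C x y x' y' : int) : Prop :=
  [/\ (C %| x - x')%Z && (C %| y - y')%Z,
      (0 <= x' <= reduct_bound A B C) && (0 <= y' <= reduct_bound A B C),
      det_equiv A B x y x' y'
    & x = x' /\ y = y' \/ off_box A x y /\ off_box A x' y'].

Lemma sub_mul_window (P E S : int) : 0 < S ->
  exists2 k, 0 <= k & P - k * S <= E + S /\ (P - k * S = P \/ E < P - k * S).
Proof.
move=> S_gt0; have [P_le|P_gt] := lerP P E.
  by exists 0 => //; rewrite mul0r subr0; split; [lia|left].
exists ((P - E - 1) %/ S)%Z; first by rewrite divz_ge0 //; lia.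
have := divz_eq (P - E - 1) S; have := ltz_pmod (P - E - 1) S_gt0.
have := modz_ge0 (P - E - 1) (lt0r_neq0 S_gt0).
by set q := (_ %/ _)%Z; set r := (_ %% _)%Z => r_ge0 r_lt e; split; [|right]; lia.
Qed.

Lemma det2_sign_near_line {c B a b ma mb u0 u1 : int} :
  0 <= c -> 0 < a <= B -> 0 <= ma <= B -> 0 <= mb <= B ->
  2 * c * B < u0 -> `|det2 a b u0 u1| <= c ->
  (0 < det2 ma mb a b -> c < det2 ma mb u0 u1) /\
  (det2 ma mb a b < 0 -> det2 ma mb u0 u1 < - c).
Proof.
rewrite ler_norml => c_ge0 /andP[a_gt0 aB] /andP[ma_ge0 maB] _ u0_big /andP[F_ge F_le].
have id : a * det2 ma mb u0 u1 = det2 ma mb a b * u0 + det2 a b u0 u1 * ma.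
  by rewrite /det2; ring.
move: id F_ge F_le; set g := det2 ma mb u0 u1; set e := det2 ma mb a b.
set F := det2 a b u0 u1 => id F_ge F_le.
have Fma_le : `|F * ma| <= c * B.
  by rewrite normrM (ger0_norm ma_ge0) ler_pM // ler_norml F_ge F_le.
move: Fma_le; rewrite ler_norml => /andP[Fma_ge Fma_le].
have ca_le : c * a <= c * B by rewrite ler_wpM2l.
by split=> he; nia.
Qed.

Lemma eq_beyond_near_line {c B a b ma mb u0 u1 u0' u1' t : int} :
  0 <= c -> 0 < a <= B -> 0 <= ma <= B -> 0 <= mb <= B ->
  2 * c * B < u0 -> 2 * c * B < u0' ->
  `|det2 a b u0 u1| <= c -> `|det2 a b u0' u1'| <= c ->
  det2 ma mb u0' u1' = det2 ma mb u0 u1 + t * det2 ma mb a b ->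
  eq_beyond c (det2 ma mb u0 u1) (det2 ma mb u0' u1').
Proof.
move=> c_ge0 ha hma hmb u_big u'_big near near' e.
have [sg_u sg_u'] := (det2_sign_near_line c_ge0 ha hma hmb u_big near,
                      det2_sign_near_line c_ge0 ha hma hmb u'_big near').
case: (ltrgt0P (det2 ma mb a b)) => hd.
- by right; left; split; [apply: sg_u.1|apply: sg_u'.1].
- by right; right; split; [apply: sg_u.2|apply: sg_u'.2].
- by left; rewrite e hd mulr0 addr0.
Qed.

(* [b / (a + b)] increases with the slope of [(a, b)] and stays finite for [a = 0]. *)
Lemma slope_key_le (a b c d : nat) : (0 < a + b)%N -> (0 < c + d)%N ->
  (b%:R / (a + b)%:R <= d%:R / (c + d)%:R :> rat) = (b * c <= a * d)%N.
Proof.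
move=> ab_gt0 cd_gt0.
rewrite ler_pdivrMr ?ltr0n // mulrAC ler_pdivlMr ?ltr0n // -!natrM ler_nat.
by apply/idP/idP; nia.
Qed.

Lemma max_slope_direction (B x y : int) : 0 < B -> 0 < y ->
  exists a1 b1, [/\ dir_box B a1 b1, 0 < det2 a1 b1 x y &
    forall a b, dir_box B a b -> 0 < det2 a b x y -> 0 <= det2 a b a1 b1].
Proof.
move=> B_gt0 y_gt0.
have [n eB] : exists n : nat, B = n by exists `|B|%N; rewrite gez0_abs // ltW.
subst B; have n_gt0 : (0 < n)%N by rewrite -ltz_nat.
pose P (t : 'I_n.+1 * 'I_n.+1) := 0 < det2 (t.1 : nat)%:Z (t.2 : nat)%:Z x y.
pose key (t : 'I_n.+1 * 'I_n.+1) : rat := (t.2 : nat)%:R / (t.1 + t.2)%:R.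
have P10 : P (inord 1, ord0) by rewrite /P /= inordK // /det2 mul1r mul0r subr0.
case: (arg_maxP key P10) => t1 Pt1 t1_max.
exists (t1.1 : nat)%:Z, (t1.2 : nat)%:Z; split=> //.
  by have := ltn_ord t1.1; have := ltn_ord t1.2; rewrite /dir_box; lia.
move=> a b /andP[/andP[a_ge0 aB] /andP[b_ge0 bB]] hab.
have [a' ea] : exists a' : nat, a = a' by exists `|a|%N; rewrite gez0_abs.
have [b' eb] : exists b' : nat, b = b' by exists `|b|%N; rewrite gez0_abs.
subst a b.
have aB' : (a' < n.+1)%N by lia.
have bB' : (b' < n.+1)%N by lia.
have := t1_max (inord a', inord b'); rewrite /P /key /= !inordK // => /(_ hab).
have nz (p q : nat) : 0 < det2 p%:Z q%:Z x y -> (0 < p + q)%N.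
  rewrite lt0n; apply: contraTneq => /eqP; rewrite addn_eq0 => /andP[/eqP-> /eqP->].
  by rewrite /det2 !mul0r subrr.
rewrite slope_key_le ?(nz _ _ hab) ?(nz _ _ Pt1) // /det2; lia.
Qed.

Lemma sector_directions {B x y : int} : 0 < B -> 0 < x -> 0 < y ->
  exists a1 b1 a2 b2, [/\ dir_box B a1 b1 && dir_box B a2 b2,
    0 < det2 a1 b1 x y, det2 a2 b2 x y < 0, 0 < det2 a1 b1 a2 b2 &
    forall a b, dir_box B a b ->
      (0 < det2 a b x y -> 0 <= det2 a b a1 b1 /\ 0 <= det2 a b a2 b2) /\
      (det2 a b x y < 0 -> det2 a b a1 b1 <= 0 /\ det2 a b a2 b2 <= 0)].
Proof.
move=> B_gt0 x_gt0 y_gt0.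
have [a1 [b1 [box1 pos1 max1]]] := max_slope_direction _ x _ B_gt0 y_gt0.
have [b2 [a2 [box2 pos2 max2]]] := max_slope_direction _ y _ B_gt0 x_gt0.
have det2_swap u v s t : det2 v u t s = - det2 u v s t by rewrite /det2; ring.
have box_swap u v : dir_box B u v -> dir_box B v u by rewrite /dir_box andbC.
have neg2 : det2 a2 b2 x y < 0 by rewrite -oppr_gt0 -det2_swap.
move: (box1) (box2) => /andP[/andP[a1_ge0 _] /andP[b1_ge0 _]].
move=> /andP[/andP[b2_ge0 _] /andP[a2_ge0 _]].
move: pos1 neg2; rewrite /det2 => pos1 neg2.
have a1_gt0 : 0 < a1 by nia.
have b2_gt0 : 0 < b2 by nia.
have D_gt0 : 0 < det2 a1 b1 a2 b2.
  have : det2 a1 b1 a2 b2 * x = (x * b2 - y * a2) * a1 + (a1 * y - b1 * x) * a2.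
    by rewrite /det2; ring.
  nia.
exists a1, b1, a2, b2; split=> //; first by rewrite box1 box_swap.
move=> a b box; move: (box) => /andP[/andP[a_ge0 _] /andP[b_ge0 _]]; split=> hm.
  have e1_ge0 := max1 a b box hm.
  have : det2 a b a2 b2 * a1 = det2 a b a1 b1 * a2 + det2 a1 b1 a2 b2 * a.
    by rewrite /det2; ring.
  by split=> //; nia.
have e2_le0 : det2 a b a2 b2 <= 0.
  rewrite -oppr_ge0 -det2_swap; apply: max2; first exact: box_swap.
  by rewrite det2_swap oppr_gt0.
have : det2 a b a1 b1 * b2 = det2 a b a2 b2 * b1 - det2 a1 b1 a2 b2 * b.
  by rewrite /det2; ring.
by split=> //; nia.
Qed.

Lemma cone_gt_beyond {c D P Q P' Q' e1 e2 g g' : int} :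
  0 < D -> 0 <= e1 -> 0 <= e2 -> 0 < P' -> 0 < Q' ->
  P' = P \/ D * c < P' -> Q' = Q \/ D * c < Q' ->
  D * g = P * e1 + Q * e2 -> D * g' = P' * e1 + Q' * e2 -> c < g -> g' = g \/ c < g'.
Proof.
move=> D_gt0 e1_ge0 e2_ge0 P'_gt0 Q'_gt0 hP hQ eg eg' g_gt.
have term (R R' e : int) : 0 <= e -> 0 < R' -> R' = R \/ D * c < R' ->
    R' * e = R * e \/ D * c < R' * e.
  move=> e_ge0 R'_gt0 [->|hR]; first by left.
  have [e_gt0|e_le0] := ltrP 0 e; first by right; nia.
  by left; rewrite (_ : e = 0) ?mulr0 //; lia.
case: (term _ _ _ e1_ge0 P'_gt0 hP) (term _ _ _ e2_ge0 Q'_gt0 hQ) => [t1|t1] [t2|t2].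
- by left; apply: (mulfI (lt0r_neq0 D_gt0)); rewrite eg eg' t1 t2.
all: by right; nia.
Qed.

Lemma eq_beyond_cone {c D P Q P' Q' e1 e2 g g' : int} :
  0 <= c -> 0 < D -> 0 < P' -> 0 < Q' ->
  P' = P \/ D * c < P' -> Q' = Q \/ D * c < Q' ->
  D * g = P * e1 + Q * e2 -> D * g' = P' * e1 + Q' * e2 ->
  (0 < g -> 0 <= e1 /\ 0 <= e2) -> (g < 0 -> e1 <= 0 /\ e2 <= 0) ->
  c < `|g| -> eq_beyond c g g'.
Proof.
move=> c_ge0 D_gt0 P'_gt0 Q'_gt0 hP hQ eg eg' pos neg.
case: (ltrgt0P g) => hg g_far.
- have [e1_ge0 e2_ge0] := pos hg.
  by case: (cone_gt_beyond D_gt0 e1_ge0 e2_ge0 P'_gt0 Q'_gt0 hP hQ eg eg' g_far);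
    [left|right; left].
- have [e1_le0 e2_le0] := neg hg.
  have := @cone_gt_beyond c D P Q P' Q' (- e1) (- e2) (- g) (- g').
  rewrite !oppr_ge0 !mulrN -!opprD eg eg'.
  case=> // [/oppr_inj->|]; first by left.
  by rewrite ltrNr => hg'; right; right; split; rewrite // -ltrNr.
- by move: g_far; lra.
Qed.

Section Reduct.
Variables A B C : int.
Hypotheses (A_gt0 : 0 < A) (B_gt0 : 0 < B) (C_gt0 : 0 < C).

Lemma reduct_refl x y :
  0 <= x <= reduct_bound A B C -> 0 <= y <= reduct_bound A B C ->
  reduct A B C x y x y.
Proof.
move=> hx hy; split; rewrite ?subrr ?dvdz0 ?hx ?hy //; last by left.
by move=> a b _; left.
Qed.

Lemma reduct_swap x y x' y' : reduct A B C y x y' x' -> reduct A B C x y x' y'.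
Proof.
case=> /andP[dy dx] /andP[hy hx] equiv same; split; rewrite ?dx ?dy ?hx ?hy //.
  move=> a b box; have := eq_beyond_oppr (equiv b a _).
  rewrite /dir_box andbC => /(_ box).
  by rewrite /det2 !opprB.
by case: same => [[-> ->]|[o o']]; [left|right; split; rewrite /off_box or_comm].
Qed.

Lemma reduct_near_line {x y a b : int} :
  0 <= x -> 0 <= y -> reduct_bound A B C < x \/ reduct_bound A B C < y ->
  0 <= b <= a -> 0 < a <= B -> `|det2 a b x y| <= A * B ->
  exists x' y', reduct A B C x y x' y'.
Proof.
rewrite /reduct_bound => x_ge0 y_ge0 big /andP[b_ge0 ba] ha near.
have /andP[a_gt0 aB] := ha.
have AB_gt0 : 0 < A * B by rewrite mulr_gt0.
have up_line u v : det2 a b u v <= A * B -> 0 <= u -> v <= A * B + u.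
  rewrite /det2 => h u_ge0; have : a * (v - u) <= A * B by nia.
  nia.
have x_big : 2 * (A * B) * B < x.
  move: near; rewrite ler_norml => /andP[_ /up_line/(_ x_ge0)]; nia.
have [k k_ge0 [x'_le kx]] := sub_mul_window x (2 * (A * B) * B) (C * a) (mulr_gt0 C_gt0 a_gt0).
set x' := x - k * (C * a); set y' := y - k * (C * b).
have x'_big : 2 * (A * B) * B < x' by case: kx => [e|//]; rewrite /x' e.
have near' : `|det2 a b x' y'| <= A * B.
  by rewrite (_ : det2 a b x' y' = det2 a b x y) // /det2 /x' /y'; ring.
have y'_ge0 : 0 <= y'.
  move: near'; rewrite ler_norml /det2 => /andP[h _].
  have [b_gt0|b_le0] := ltrP 0 b; first nia.
  by rewrite /y' (_ : b = 0) ?mulr0 ?subr0 //; lia.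
have y'_le : y' <= A * B + x'.
  by apply: up_line; [move: near'; rewrite ler_norml => /andP[]|lia].
exists x', y'; split.
- have -> : x - x' = C * (k * a) by rewrite /x'; ring.
  have -> : y - y' = C * (k * b) by rewrite /y'; ring.
  by rewrite !dvdz_mulr.
- have Ca_le : C * a <= B * C by rewrite mulrC ler_wpM2r // ltW.
  have AB_le : A * B <= A * B * B by rewrite ler_peMr // ltW.
  by rewrite /reduct_bound expr2; apply/andP; split; apply/andP; split; lia.
- move=> ma mb /andP[hma hmb].
  apply: (eq_beyond_near_line (t := - (k * C)) (ltW AB_gt0) ha hma hmb x_big x'_big near near').
  by rewrite /det2 /x' /y'; ring.
- by right; split; left; nia.
Qed.

Lemma cramer_coord_bound {D P Q a a' u : int} : 0 < D ->
  0 <= P <= D * (A * B + C) -> 0 <= Q <= D * (A * B + C) -> 0 <= a <= B -> 0 <= a' <= B ->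
  D * u = P * a + Q * a' -> 0 <= u <= reduct_bound A B C.
Proof.
move=> D_gt0 /andP[P_ge0 P_le] /andP[Q_ge0 Q_le] /andP[a_ge0 aB] /andP[a'_ge0 a'B] e.
have Pa_le : P * a <= D * (A * B + C) * B by rewrite ler_pM.
have Qa_le : Q * a' <= D * (A * B + C) * B by rewrite ler_pM.
have u_le : u <= 2 * (A * B + C) * B by rewrite -(ler_pM2l D_gt0) e; lra.
rewrite -(pmulr_rge0 _ D_gt0) e addr_ge0 ?mulr_ge0 //= (le_trans u_le) //.
by rewrite /reduct_bound expr2; nia.
Qed.

Lemma det2_far_coord {x y : int} : 0 <= x -> 0 <= y ->
  (forall a b, dir_box B a b -> 0 < a + b -> A * B < `|det2 a b x y|) ->
  A * B < x /\ A * B < y.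
Proof.
move=> x_ge0 y_ge0 far.
have box10 : dir_box B 1 0 by rewrite /dir_box; lia.
have box01 : dir_box B 0 1 by rewrite /dir_box; lia.
have := far 0 1 box01 ltr01; have := far 1 0 box10 ltr01.
by rewrite /det2 !mul1r !mul0r sub0r subr0 normrN !ger0_norm.
Qed.

Lemma reduct_off_lines x y : 0 <= x -> 0 <= y ->
  (forall a b, dir_box B a b -> 0 < a + b -> A * B < `|det2 a b x y|) ->
  exists x' y', reduct A B C x y x' y'.
Proof.
move=> x_ge0 y_ge0 far.
have AB_gt0 : 0 < A * B by rewrite mulr_gt0.
have box10 : dir_box B 1 0 by rewrite /dir_box; lia.
have [x_big y_big] := det2_far_coord x_ge0 y_ge0 far.
have [a1 [b1 [a2 [b2 [/andP[box1 box2] pos1 neg2 D_gt0 sector]]]]] :=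
  sector_directions B_gt0 (lt_trans AB_gt0 x_big) (lt_trans AB_gt0 y_big).
(* Cramer: [D (x, y) = P (a1, b1) + Q (a2, b2)]. *)
set D := det2 a1 b1 a2 b2; set P := det2 x y a2 b2; set Q := det2 a1 b1 x y.
have P_gt0 : 0 < P by move: neg2; rewrite /P /det2; lia.
have CD_gt0 : 0 < C * D by rewrite mulr_gt0.
have [k1 k1_ge0 [P'_le hP]] := sub_mul_window P (D * (A * B)) (C * D) CD_gt0.
have [k2 k2_ge0 [Q'_le hQ]] := sub_mul_window Q (D * (A * B)) (C * D) CD_gt0.
set P' := P - k1 * (C * D) in P'_le hP; set Q' := Q - k2 * (C * D) in Q'_le hQ.
have DAB_gt0 : 0 < D * (A * B) by rewrite mulr_gt0.
have P'_gt0 : 0 < P' by case: hP => [->|/(lt_trans DAB_gt0)].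
have Q'_gt0 : 0 < Q' by case: hQ => [->|/(lt_trans DAB_gt0)].
set x' := x - C * (k1 * a1 + k2 * a2); set y' := y - C * (k1 * b1 + k2 * b2).
have equiv : det_equiv A B x y x' y'.
  move=> a b box; have [ab_gt0|ab_le0] := ltrP 0 (a + b).
    apply: (eq_beyond_cone (ltW AB_gt0) D_gt0 P'_gt0 Q'_gt0 hP hQ _ _
              (sector a b box).1 (sector a b box).2 (far a b box ab_gt0));
      by rewrite /P' /Q' /x' /y' /D /P /Q /det2; ring.
  have [-> ->] : a = 0 /\ b = 0 by move: box; rewrite /dir_box; lia.
  by left; rewrite /det2 !mul0r.
exists x', y'; split=> //.
- have -> : x - x' = C * (k1 * a1 + k2 * a2) by rewrite /x'; ring.
  have -> : y - y' = C * (k1 * b1 + k2 * b2) by rewrite /y'; ring.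
  by rewrite !dvdz_mulr.
- have P'_box : 0 <= P' <= D * (A * B + C) by rewrite ltW //=; lia.
  have Q'_box : 0 <= Q' <= D * (A * B + C) by rewrite ltW //=; lia.
  move: box1 box2 => /andP[box_a1 box_b1] /andP[box_a2 box_b2].
  apply/andP; split; [apply: (cramer_coord_bound D_gt0 P'_box Q'_box box_a1 box_a2)
                     |apply: (cramer_coord_bound D_gt0 P'_box Q'_box box_b1 box_b2)];
    by rewrite /P' /Q' /x' /y' /D /P /Q /det2; ring.
- have AB_ge : A <= A * B by rewrite ler_peMr // ltW.
  right; split; right; first exact: le_lt_trans AB_ge y_big.
  case: (equiv 1 0 box10); rewrite /det2 !mul1r !mul0r !subr0; lra.
Qed.

Lemma exists_reduct x y : 0 <= x -> 0 <= y -> exists x' y', reduct A B C x y x' y'.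
Proof.
move=> x_ge0 y_ge0.
have [/andP[x_le y_le]|] := boolP ((x <= reduct_bound A B C) && (y <= reduct_bound A B C)).
  by exists x, y; apply: reduct_refl; apply/andP.
rewrite negb_and -!ltNge => /orP big.
case: (classic (exists a b, [/\ dir_box B a b, 0 < a + b & `|det2 a b x y| <= A * B])).
  move=> [a [b [/andP[/andP[a_ge0 aB] /andP[b_ge0 bB]] ab_gt0 near]]].
  have [ba|ab] := lerP b a.
    by apply: (reduct_near_line (a := a) (b := b) x_ge0 y_ge0 big); rewrite ?b_ge0 ?aB //; lia.
  have [y' [x' r]] : exists y' x', reduct A B C y x y' x'.
    apply: (reduct_near_line (a := b) (b := a) y_ge0 x_ge0 (iffLR (or_comm _ _) big)).
    - by rewrite a_ge0 ltW.
    - by rewrite bB (le_lt_trans a_ge0 ab).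
    by rewrite (_ : det2 b a y x = - det2 a b x y) ?normrN // /det2; ring.
  by exists x', y'; apply: reduct_swap.
move=> near; apply: reduct_off_lines => // a b box ab_gt0; rewrite ltNge.
by apply/negP => hab; apply: near; exists a, b.
Qed.

End Reduct.

Lemma intr_det2 (R : comPzRingType) (a b x y : int) :
  (det2 a b x y)%:~R = det2 a%:~R b%:~R x%:~R y%:~R :> R.
Proof. by rewrite /det2 intrB !intrM. Qed.

Lemma off_box_intr (R : numDomainType) (A x y : int) :
  off_box A x y -> off_box (A%:~R : R) x%:~R y%:~R.
Proof. by case=> h; [left|right]; rewrite ltr_int. Qed.

Lemma reduct_bound_nat (A B C : nat) :
  reduct_bound A B C = (3 * (A * B ^ 2 + B * C))%N :> int.
Proof. by rewrite /reduct_bound -[RHS]natz natrM natrD !natrM !natz expr2. Qed.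

Lemma natvec_vec2 (x y : int) : 0 <= x -> 0 <= y -> natvec (vec2 x%:~R y%:~R).
Proof.
move=> x_ge0 y_ge0 i; case: (ord2P i) => ->; rewrite vec2E;
  [exists `|x|%N|exists `|y|%N]; by rewrite pmulrn gez0_abs.
Qed.

Lemma vnorm_vec2_le (x y b : int) :
  0 <= x <= b -> 0 <= y <= b -> vnorm (vec2 x%:~R y%:~R) <= b%:~R.
Proof.
move=> /andP[x_ge0 x_le] /andP[y_ge0 y_le].
apply: bigmax_le => [|i _]; first by rewrite ler0z (le_trans x_ge0).
by case: (ord2P i) => ->; rewrite vec2E -intr_norm ler_int ger0_norm.
Qed.

Lemma in_CZ_vec2 (C : nat) (x y x' y' : int) : (C %| x - x')%Z -> (C %| y - y')%Z ->
  in_CZ C (vec2 x%:~R y%:~R - vec2 x'%:~R y'%:~R).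
Proof.
move=> /dvdzP[p ep] /dvdzP[q eq] i.
case: (ord2P i) => ->; rewrite !mxE -intrB ?ep ?eq; [exists p|exists q];
  by rewrite intrM mulrC -pmulrn.
Qed.

Lemma in_reg_vec2 (A B : nat) (x y x' y' : int) : 0 <= x' -> 0 <= y' ->
  det_equiv A B x y x' y' ->
  x = x' /\ y = y' \/ off_box A%:Z x y /\ off_box A%:Z x' y' ->
  in_reg A B (vec2 x%:~R y%:~R) (vec2 x'%:~R y'%:~R).
Proof.
move=> x'_ge0 y'_ge0 equiv same.
split; first by move=> i; case: (ord2P i) => ->; rewrite vec2E ler0z.
have equiv_rat (a b : nat) : (a <= B)%N -> (b <= B)%N ->
    eq_beyond (A%:R * B%:R) (det2 a%:R b%:R (vec2 x%:~R y%:~R 0 0) (vec2 x%:~R y%:~R 1 0))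
      (det2 a%:R b%:R (vec2 x'%:~R y'%:~R 0 0) (vec2 x'%:~R y'%:~R 1 0)).
  move=> aB bB; have box : dir_box B a b by rewrite /dir_box; lia.
  by have := eq_beyond_intr rat (equiv a b box); rewrite intrM !intr_det2 -!pmulrn !vec2E.
have off_rat : vec2 x%:~R y%:~R = vec2 x'%:~R y'%:~R \/
    off_box A%:R (vec2 x%:~R y%:~R 0 0) (vec2 x%:~R y%:~R 1 0) /\
    off_box A%:R (vec2 x'%:~R y'%:~R 0 0) (vec2 x'%:~R y'%:~R 1 0).
  case: same => [[<- <-]|[off off']]; [by left|right].
  by rewrite !vec2E pmulrn; split; exact: off_box_intr.
move=> w M w_box M_int; split; apply: in_angle_transfer w_box M_int _ _.
- exact: equiv_rat.
- exact: off_rat.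
- by move=> a b aB bB; apply: eq_beyond_sym; exact: equiv_rat.
- by case: off_rat => [->|[]]; [left|right].
Qed.

Theorem lemma3 :
  exists K : rat, 0 <= K /\
    forall (A B C : nat), (0 < A)%N -> (0 < B)%N -> (0 < C)%N ->
    forall v : vec, natvec v ->
      exists v' : vec,
        natvec v' /\
        vnorm v' <= K * (A * B ^ 2 + B * C)%N%:R /\
        in_reg A B v v' /\
        in_CZ C (v - v').
Proof.
exists 3%:R; split=> // A B C A_gt0 B_gt0 C_gt0 v v_nat.
have [x ex] := v_nat 0; have [y ey] := v_nat 1.
have -> : v = vec2 x%:Z%:~R y%:Z%:~R by apply: cV2P; rewrite vec2E ?ex ?ey -pmulrn.
have [x' [y' [/andP[dx dy] /andP[x'_box y'_box] equiv same]]] :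
    exists x' y', reduct A B C x y x' y' by apply: exists_reduct; rewrite ?ltz_nat.
have [/andP[x'_ge0 _] /andP[y'_ge0 _]] := (x'_box, y'_box).
exists (vec2 x'%:~R y'%:~R); split; [|split; [|split]].
- exact: natvec_vec2.
- by rewrite -natrM pmulrn -reduct_bound_nat vnorm_vec2_le.
- exact: in_reg_vec2.
- exact: in_CZ_vec2.
Qed.
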